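(* Let $q\in\Bbbk$ be arbitrary, let $M$ be any left $\mathcal H_n(q)$-module, and let the subspaces $U_1,\dots,U_{n-1}$ of $M$ be defined either by $U_i=\operatorname{Ker}(T_i-q)_M$ for all $i$, or by $U_i=\operatorname{Im}(T_i+1)_M$ for all $i$. For $0\le i<n$ put $$x_i=\sum_{\sigma\in\mathcal D_i}T_\sigma,\qquad y_i=\sum_{\sigma\in\mathcal D_i^\triangledown}(-1)^{\ell(\sigma)}q^{\,n-1-i-\ell(\sigma)}T_\sigma,$$ where $\mathcal D_i=\{e,\tau_i,\tau_{i-1}\tau_i,\dots,\tau_1\tau_2\cdots\tau_i\}$ and $\mathcal D_i^\triangledown=\{e,\tau_{i+1},\tau_{i+1}\tau_{i+2},\dots,\tau_{i+1}\tau_{i+2}\cdots\tau_{n-1}\}$. Then (i) $x_i$ maps $\Upsilon_i$ into $\Upsilon_{i+1}$ and $y_i$ maps $\Sigma_i$ into $\Sigma_{i+1}$; (ii) the element $x_iy_i$ induces a linear map $s_i:K_i\to K_{i+1}$ of the components of the complex $K_\bullet(M;(U_i))$; (iii) $\partial_{i+1}s_i+s_{i-1}\partial_i=[n]_q\,\mathrm{Id}$ on $K_i$ for $0\le i\le n$ (with $s_{-1}=0$, $s_n=0$, $\partial_0=0$, $\partial_{n+1}=0$). Consequently, if $[n]_q=1+q+\dots+q^{n-1}\neq0$, the complex $K_\bullet(M;(U_i))$ is exact.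
   Context: $\mathcal H_n(q)$ is the Hecke algebra over a field $\Bbbk$ with generators $T_1,\dots,T_{n-1}$, braid relations and $(T_i-q)(T_i+1)=0$ (here $q=0$ is allowed), with standard basis $T_\sigma$, $\sigma\in\mathfrak S_n$ ($T_e=1$, $T_{\tau_i\sigma}=T_iT_\sigma$ when $\ell(\tau_i\sigma)>\ell(\sigma)$, $\tau_i=(i,i+1)$). For $x\in\mathcal H_n$, $x_M$ denotes the operator by which $x$ acts on $M$. Given subspaces $U_1,\dots,U_{n-1}$ of a vector space $M$, the complex $K_\bullet(M;(U_i))$: $0\to K_n\to\dots\to K_i\xrightarrow{\partial_i}K_{i-1}\to\dots\to K_0\to0$ has $K_i=\Upsilon_i/(\Upsilon_i\cap\Sigma_i)$ for $0\le i\le n$, where $\Upsilon_i=\bigcap_{j<i}U_j$, $\Sigma_i=\sum_{j>i}U_j$ (with $\Upsilon_0=\Upsilon_1=M$ and $\Sigma_{n-1}=\Sigma_n=0$), and differentials induced by the inclusions $\Upsilon_i\subset\Upsilon_{i-1}$, $\Sigma_i\subset\Sigma_{i-1}$. *)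

From HB Require Import structures.
From mathcomp Require Import all_boot all_order all_algebra.
Set Implicit Arguments. Unset Strict Implicit. Unset Printing Implicit Defensive.
Import Order.TTheory GRing.Theory Num.Theory.
Local Open Scope ring_scope.

Definition is_Hecke_module (k : fieldType) (M : lmodType k) (n : nat) (q : k)
    (T : nat -> {linear M -> M}) : Prop :=
  (forall i (m : M), (1 <= i < n)%N -> T i (T i m) = (q - 1) *: T i m + q *: m)
  /\ (forall i (m : M), (1 <= i)%N -> (i.+1 < n)%N ->
        T i (T i.+1 (T i m)) = T i.+1 (T i (T i.+1 m)))
  /\ (forall i j (m : M), (1 <= i < n)%N -> (1 <= j < n)%N -> (i.+1 < j)%N ->
        T i (T j m) = T j (T i m)).

(* Action of T_{tau_{s1} tau_{s2} ... tau_{sr}} = T_{s1} T_{s2} ... T_{sr}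
   (the words used below are reduced, so this is T_sigma). *)
Definition word_act (k : fieldType) (M : lmodType k) (T : nat -> {linear M -> M})
    (s : seq nat) (m : M) : M := foldr (fun j v => T j v) m s.

(* x_i = sum_{sigma in D_i} T_sigma, D_i = {tau_a tau_{a+1} ... tau_i : 1 <= a <= i+1}
   (a = i+1 gives e). *)
Definition x_act (k : fieldType) (M : lmodType k) (T : nat -> {linear M -> M})
    (i : nat) (m : M) : M :=
  \sum_(1 <= a < i.+2) word_act T (iota a (i.+1 - a)) m.

(* y_i = sum_{sigma in D_i^v} (-1)^l(sigma) q^(n-1-i-l(sigma)) T_sigma,
   sigma = tau_{i+1} ... tau_{i+r}, 0 <= r <= n-1-i, l(sigma) = r. *)
Definition y_act (k : fieldType) (M : lmodType k) (n : nat) (q : k)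
    (T : nat -> {linear M -> M}) (i : nat) (m : M) : M :=
  \sum_(r < n - i) (((-1) ^+ r * q ^+ (n - 1 - i - r)) *: word_act T (iota i.+1 r) m).

Definition qint (k : fieldType) (n : nat) (q : k) : k := \sum_(r < n) q ^+ r.

Definition Upsilon (k : fieldType) (M : lmodType k) (U : nat -> M -> Prop)
    (i : nat) (m : M) : Prop :=
  forall j, (1 <= j < i)%N -> U j m.

Definition Sigma (k : fieldType) (M : lmodType k) (n : nat) (U : nat -> M -> Prop)
    (i : nat) (m : M) : Prop :=
  exists f : nat -> M, (forall j, (i < j < n)%N -> U j (f j))
                       /\ m = \sum_(i.+1 <= j < n) f j.

(* Only four properties of the family U_i are used, collected in the record
   [admissible]: each U_j is a subspace, linear maps intertwining T_a with T_b
   send U_a into U_b, U_j contains Im (T_j + 1), and T_j acts on U_j by q.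
   Both families Ker (T_j - q) and Im (T_j + 1) are admissible by the quadratic
   relation.  The development then runs as follows.
   - Words T_b T_(b+1) ... T_(b+L-1) commute with far generators T_j and, by the
     braid relation, intertwine T_j with T_(j+1) when b <= j < b+L-1; this gives
     the mapping properties x_i : Ups_i -> Ups_(i+1), y_i : Sig_i -> Sig_(i+1),
     x_i preserving Sig_(i+1) and y_i preserving Ups_i.
   - The recursions x_(i+1) = 1 + x_i T_(i+1) and y_i = q^(n-i-1) - T_(i+1) y_(i+1)
     show that x_i = [i+1]_q on Ups_(i+1) and y_i = [n-i]_q modulo Sig_i.
   - Combining them, s_i + s_(i-1) - [n]_q = y_i - [n-i]_q on Ups_i, which lies in
     Ups_i and Sig_i: this is the homotopy formula, from which exactness follows
     when [n]_q is invertible. *)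

From HB Require Import structures.
From mathcomp Require Import all_boot all_order all_algebra zify ring.
Set Implicit Arguments. Unset Strict Implicit. Unset Printing Implicit Defensive.
Import Order.TTheory GRing.Theory Num.Theory.
Local Open Scope ring_scope.

Record subspace (k : fieldType) (M : lmodType k) (P : M -> Prop) : Prop := Subspace {
  subspace0 : P 0;
  subspaceD : forall u v, P u -> P v -> P (u + v);
  subspaceZ : forall c u, P u -> P (c *: u)
}.

Section SubspaceTheory.
Variables (k : fieldType) (M : lmodType k) (P : M -> Prop).
Hypothesis hP : subspace P.

Lemma subspaceB u v : P u -> P v -> P (u - v).
Proof.
by move=> hu hv; apply: (subspaceD hP hu); rewrite -scaleN1r; apply: subspaceZ.
Qed.

Lemma subspace_sum a b (F : nat -> M) :
  (forall l, (a <= l < b)%N -> P (F l)) -> P (\sum_(a <= l < b) F l).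
Proof.
move=> hF; rewrite big_nat_cond; apply: big_ind; [exact: subspace0 | exact: subspaceD |].
by move=> l /andP[hl _]; apply: hF.
Qed.

End SubspaceTheory.

Lemma big_nat_split2 (V : nmodType) a j b (F : nat -> V) : (a <= j)%N -> (j.+2 <= b)%N ->
  \sum_(a <= l < b) F l
    = \sum_(a <= l < j) F l + (F j + F j.+1) + \sum_(j.+2 <= l < b) F l.
Proof.
move=> haj hjb; rewrite (big_cat_nat (n := j)) //=; last lia.
rewrite -addrA (big_ltn (m := j)); last lia.
by rewrite (big_ltn (m := j.+1)) ?(addrA (F j)) //; lia.
Qed.

Section QInteger.
Variables (k : fieldType) (q : k).

Lemma qintSr j : qint j.+1 q = qint j q + q ^+ j.
Proof. by rewrite /qint big_ord_recr. Qed.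

Lemma qintSl j : qint j.+1 q = 1 + q * qint j q.
Proof.
rewrite /qint big_ord_recl expr0 mulr_sumr; congr (_ + _).
by apply: eq_bigr => r _; rewrite exprS.
Qed.

Lemma qintD a b : qint (a + b) q = qint a q + q ^+ a * qint b q.
Proof.
rewrite /qint big_split_ord mulr_sumr /=; congr (_ + _).
by apply: eq_bigr => r _; rewrite exprD.
Qed.

End QInteger.

Section WordAction.
Variables (k : fieldType) (M : lmodType k) (T : nat -> {linear M -> M}).

Lemma word_act_is_linear s : linear (word_act T s).
Proof. by elim: s => [|j s IH] a u v //=; rewrite -!/(word_act T s _) IH linearP. Qed.

HB.instance Definition _ s :=
  GRing.isLinear.Build k M M *:%R (word_act T s) (word_act_is_linear s).

Lemma word_act_cat s1 s2 v :
  word_act T (s1 ++ s2) v = word_act T s1 (word_act T s2 v).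
Proof. by rewrite /word_act foldr_cat. Qed.

Lemma x_act_is_linear i : linear (x_act T i).
Proof.
move=> a u v; rewrite /x_act scaler_sumr -big_split.
by apply: eq_bigr => l _; rewrite linearP.
Qed.

HB.instance Definition _ i :=
  GRing.isLinear.Build k M M *:%R (x_act T i) (x_act_is_linear i).

Lemma x_act0 v : x_act T 0 v = v.
Proof. by rewrite /x_act big_nat1. Qed.

Lemma x_actS i v : x_act T i.+1 v = v + x_act T i (T i.+1 v).
Proof.
rewrite /x_act big_nat_recr //= subnn addrC; congr (_ + _).
apply: eq_big_nat => a ha.
have -> : (i.+2 - a = (i.+1 - a) + 1)%N by lia.
by rewrite iotaD word_act_cat /=; congr (word_act _ _ (T _ _)); lia.
Qed.

Variables (n : nat) (q : k).

Lemma y_act_is_linear i : linear (y_act n q T i).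
Proof.
move=> a u v; rewrite /y_act scaler_sumr -big_split.
by apply: eq_bigr => r _; rewrite linearP scalerDr !scalerA mulrC.
Qed.

HB.instance Definition _ i :=
  GRing.isLinear.Build k M M *:%R (y_act n q T i) (y_act_is_linear i).

Lemma y_act_nat i v : y_act n q T i v =
  \sum_(0 <= r < n - i) ((-1) ^+ r * q ^+ (n - 1 - i - r)) *: word_act T (iota i.+1 r) v.
Proof. by rewrite big_mkord. Qed.

Lemma y_act_n v : y_act n q T n v = 0.
Proof. by rewrite /y_act subnn big_ord0. Qed.

Lemma y_act_rec i v : (i < n)%N ->
  y_act n q T i v = q ^+ (n - i.+1) *: v - T i.+1 (y_act n q T i.+1 v).
Proof.
move=> hi; rewrite !y_act_nat -[(n - i)%N](@subnSK i n) //.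
rewrite big_nat_recl // linear_sum -sumrN expr0 mul1r subn0 /=; congr (_ *: _ + _).
  by congr (_ ^+ _); lia.
apply: eq_bigr => r _; rewrite linearZ -scaleNr exprS mulN1r mulNr.
by congr (- (_ * _ ^+ _) *: _); lia.
Qed.

End WordAction.

Section HeckeWords.
Variables (k : fieldType) (M : lmodType k) (n : nat) (q : k) (T : nat -> {linear M -> M}).
Hypothesis HT : is_Hecke_module n q T.

Lemma Hecke_quadratic i m : (1 <= i < n)%N -> T i (T i m) = (q - 1) *: T i m + q *: m.
Proof. by case: HT => quad _; exact: quad. Qed.

Lemma Hecke_braid i m : (1 <= i)%N -> (i.+1 < n)%N ->
  T i (T i.+1 (T i m)) = T i.+1 (T i (T i.+1 m)).
Proof. by case: HT => _ [braid _]; exact: braid. Qed.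

Lemma Hecke_far i j m : (1 <= i < n)%N -> (1 <= j < n)%N -> (i.+1 < j)%N ->
  T i (T j m) = T j (T i m).
Proof. by case: HT => _ [_ far]; exact: far. Qed.

Definition far_from (j l : nat) : bool := (1 <= l < n)%N && ((l.+1 < j) || (j.+1 < l))%N.

Lemma word_act_far s j v : (1 <= j < n)%N -> all (far_from j) s ->
  word_act T s (T j v) = T j (word_act T s v).
Proof.
move=> hj; elim: s => [|l s IH] //= /andP[/andP[hl /orP[hlj|hjl]] hs];
  rewrite -/(word_act T s _) IH //; [exact: Hecke_far | symmetry; exact: Hecke_far].
Qed.

Lemma iota_far j a L : (forall l, (a <= l < a + L)%N -> far_from j l) -> all (far_from j) (iota a L).
Proof. by move=> h; apply/allP => l; rewrite mem_iota; apply: h. Qed.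

Lemma word_act_shift b L j v : (1 <= b <= j)%N -> (j.+1 < b + L <= n)%N ->
  word_act T (iota b L) (T j v) = T j.+1 (word_act T (iota b L) v).
Proof.
elim: L b => [|L IH] b hb hL; first by lia.
rewrite /= -!/(word_act T _ _); case: (ltngtP b j) => hbj; last first.
- subst j; case: L IH hL => [|L] IH hL; first by lia.
  rewrite /= -!/(word_act T _ _) word_act_far; last first.
  + by apply: iota_far => l hl; apply/andP; split; lia.
  + by lia.
  by rewrite Hecke_braid //; lia.
- by lia.
by rewrite IH; [apply: Hecke_far | |]; lia.
Qed.
End HeckeWords.

Record admissible (k : fieldType) (M : lmodType k) (n : nat) (q : k)
    (T : nat -> {linear M -> M}) (U : nat -> M -> Prop) : Prop := Admissible {
  adm_subspace : forall j, subspace (U j);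
  adm_intertwine : forall (A : {linear M -> M}) a b u,
    (forall v, A (T a v) = T b (A v)) -> U a u -> U b (A u);
  adm_image : forall j v, (1 <= j < n)%N -> U j (T j v + v);
  adm_eigen : forall j u, (1 <= j < n)%N -> U j u -> T j u = q *: u
}.

Section AdmissibleFamilies.
Variables (k : fieldType) (M : lmodType k) (n : nat) (q : k) (T : nat -> {linear M -> M}).
Variable U : nat -> M -> Prop.
Hypothesis HT : is_Hecke_module n q T.

Lemma T_image_eigen j v : (1 <= j < n)%N -> T j (T j v + v) = q *: (T j v + v).
Proof.
move=> hj; rewrite linearD (Hecke_quadratic HT) // scalerBl scale1r scalerDr.
by rewrite addrAC addrNK.
Qed.

Lemma kernel_admissible : (forall i m, U i m <-> T i m = q *: m) -> admissible n q T U.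
Proof.
move=> hU; split.
- move=> j; split.
  + by apply/hU; rewrite linear0 scaler0.
  + by move=> u v /hU hu /hU hv; apply/hU; rewrite linearD hu hv scalerDr.
  + by move=> c u /hU hu; apply/hU; rewrite linearZZ hu !scalerA mulrC.
- by move=> A a b u hA /hU hu; apply/hU; rewrite -hA hu linearZ.
- by move=> j v hj; apply/hU; apply: T_image_eigen.
- by move=> j u _ /hU.
Qed.

Lemma image_admissible : (forall i m, U i m <-> exists v, m = T i v + v) ->
  admissible n q T U.
Proof.
move=> hU; split.
- move=> j; split.
  + by apply/hU; exists 0; rewrite linear0 addr0.
  + move=> _ _ /hU[u ->] /hU[v ->]; apply/hU; exists (u + v).
    by rewrite linearD addrACA.
  + by move=> c _ /hU[u ->]; apply/hU; exists (c *: u); rewrite linearZ scalerDr.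
- by move=> A a b _ hA /hU[v ->]; apply/hU; exists (A v); rewrite linearD hA.
- by move=> j v hj; apply/hU; exists v.
- by move=> j _ hj /hU[v ->]; apply: T_image_eigen.
Qed.

End AdmissibleFamilies.

Section Complex.
Variables (k : fieldType) (M : lmodType k) (n : nat) (q : k) (T : nat -> {linear M -> M}).
Variable U : nat -> M -> Prop.
Hypothesis HT : is_Hecke_module n q T.
Hypothesis hU : admissible n q T U.

Local Notation Ups := (Upsilon U).
Local Notation Sig := (Sigma n U).
Local Notation x := (x_act T).
Local Notation y := (y_act n q T).

Lemma Ups_subspace i : subspace (Ups i).
Proof.
split=> [j _|u v hu hv j hj|c u hu j hj]; first exact: subspace0 (adm_subspace hU j).
  by apply: subspaceD (adm_subspace hU j) _ _ (hu j hj) (hv j hj).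
exact: subspaceZ (adm_subspace hU j) _ _ (hu j hj).
Qed.

Lemma Sig_subspace i : subspace (Sig i).
Proof.
split.
- by exists (fun=> 0); split=> [j _|]; [exact: subspace0 (adm_subspace hU j) | rewrite big1].
- move=> _ _ [f [hf ->]] [g [hg ->]]; exists (fun j => f j + g j); rewrite big_split.
  by split=> // j hj; apply: subspaceD (adm_subspace hU j) _ _ (hf j hj) (hg j hj).
- move=> c _ [f [hf ->]]; exists (fun j => c *: f j); rewrite scaler_sumr.
  by split=> // j hj; apply: subspaceZ (adm_subspace hU j) _ _ (hf j hj).
Qed.

Lemma Ups_mono i m : Ups i.+1 m -> Ups i m.
Proof. by move=> h j hj; apply: h; lia. Qed.

Lemma Sig_of_U i j u : (i < j < n)%N -> U j u -> Sig i u.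
Proof.
move=> hj hu; exists (fun l => if l == j then u else 0); split.
  by move=> l hl; case: eqP => [->|_] //=; exact: subspace0 (adm_subspace hU l).
by rewrite -big_mkcond big_nat1_eq ifT //; lia.
Qed.

Lemma Sig_mono i m : Sig i.+1 m -> Sig i m.
Proof.
move=> [f [hf ->]]; apply: (subspace_sum (Sig_subspace i)) => j hj.
by apply: (@Sig_of_U _ j); [lia | apply: hf; lia].
Qed.

(* Part (i) for x: splitting x_i at the terms starting with T_j and T_(j+1),
   the head terms intertwine T_(j-1) with T_j, the middle pair is
   (T_j + 1) applied to a vector, and the tail terms commute with T_j. *)
Lemma x_Ups i m : (i < n)%N -> Ups i m -> Ups i.+1 (x i m).
Proof.
move=> hi hm j /andP[hj1 hji]; have hUj := adm_subspace hU j.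
rewrite /x_act (big_nat_split2 _ hj1); last lia.
apply: (subspaceD hUj); first apply: (subspaceD hUj).
- apply: (subspace_sum hUj) => a ha.
  apply: (adm_intertwine hU (a := j.-1)); last by apply: hm; lia.
  by move=> v /=; rewrite (word_act_shift HT) ?prednK //; lia.
- have -> : (i.+1 - j = (i.+1 - j.+1).+1)%N by lia.
  by apply: (adm_image hU); lia.
- apply: (subspace_sum hUj) => a ha.
  apply: (adm_intertwine hU (a := j)); last by apply: hm; lia.
  move=> v /=; apply: (word_act_far HT); first lia.
  by apply: iota_far => l hl; apply/andP; split; lia.
Qed.

Lemma x_commute_far i j v : (1 <= j < n)%N -> (i.+1 < j)%N -> x i (T j v) = T j (x i v).
Proof.
move=> hj hij; rewrite /x_act linear_sum; apply: eq_big_nat => a ha.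
by apply: (word_act_far HT) => //; apply: iota_far => l hl; apply/andP; split; lia.
Qed.

Lemma x_Sig i m : Sig i.+1 m -> Sig i.+1 (x i m).
Proof.
move=> [f [hf ->]]; rewrite linear_sum; apply: (subspace_sum (Sig_subspace _)) => j hj.
apply: (@Sig_of_U _ j) => //; apply: (adm_intertwine hU (a := j)); last exact: hf.
by move=> v /=; apply: x_commute_far; lia.
Qed.

Lemma y_commute_near i j v : (i <= n)%N -> (1 <= j < i)%N -> y i (T j v) = T j (y i v).
Proof.
move=> hi hj; rewrite /y_act linear_sum; apply: eq_bigr => r _.
rewrite linearZ (word_act_far HT); first by [].
  by lia.
by apply: iota_far => l hl; apply/andP; split; have := ltn_ord r; lia.
Qed.

Lemma y_Ups i m : (i <= n)%N -> Ups i m -> Ups i (y i m).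
Proof.
move=> hi hm j hj; apply: (adm_intertwine hU (a := j)); last exact: hm.
by move=> v /=; apply: y_commute_near.
Qed.

(* Part (i) for y on a single U_j (i < j): in y_i u the terms before the
   factor T_j commute with T_j, the two terms around T_j cancel since T_j u = q u,
   and the later terms intertwine T_j with T_(j+1). *)
Lemma y_U_Sig i j u : (i < j < n)%N -> U j u -> Sig i.+1 (y i u).
Proof.
move=> hj hu; have hSig := Sig_subspace i.+1.
rewrite y_act_nat (big_nat_split2 _ (leq0n (j - i.+1))); last lia.
apply: (subspaceD hSig); first apply: (subspaceD hSig).
- apply: (subspace_sum hSig) => r hr; apply: (@Sig_of_U _ j); first lia.
  apply: (subspaceZ (adm_subspace hU j)); apply: (adm_intertwine hU (a := j)) => // v /=.
  by apply: (word_act_far HT); [lia | apply: iota_far => l hl; apply/andP; split; lia].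
- set r := (j - i.+1)%N; set e := (n - 1 - i - r.+1)%N.
  have -> : iota i.+1 r.+1 = iota i.+1 r ++ [:: j].
    by rewrite -[r.+1]addn1 iotaD; congr (_ ++ [:: _]); rewrite /r; lia.
  have -> : (n - 1 - i - r = e.+1)%N by rewrite /e /r; lia.
  rewrite word_act_cat /= (adm_eigen hU) //; last lia.
  have cancel : (-1) ^+ r * q ^+ e.+1 + (-1) ^+ r.+1 * q ^+ e * q = 0 :> k.
    by rewrite !exprS; ring.
  by rewrite linearZ /= scalerA -scalerDl cancel scale0r; apply: subspace0.
- apply: (subspace_sum hSig) => r hr; apply: (@Sig_of_U _ j.+1); first lia.
  apply: (subspaceZ (adm_subspace hU j.+1)); apply: (adm_intertwine hU (a := j)) => // v /=.
  by apply: (word_act_shift HT); lia.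
Qed.

Lemma y_Sig i m : Sig i m -> Sig i.+1 (y i m).
Proof.
move=> [f [hf ->]]; rewrite linear_sum; apply: (subspace_sum (Sig_subspace _)) => j hj.
by apply: (@y_U_Sig _ j); [lia | apply: hf; lia].
Qed.

Lemma x_on_Ups i m : (i < n)%N -> Ups i.+1 m -> x i m = qint i.+1 q *: m.
Proof.
elim: i m => [|i IH] m hi hm; first by rewrite x_act0 /qint big_ord1 expr0 scale1r.
rewrite x_actS (adm_eigen hU); [| lia | by apply: hm; lia].
rewrite linearZZ /= IH; [| lia | exact: Ups_mono].
by rewrite scalerA (qintSl _ i.+1) scalerDl scale1r.
Qed.

Lemma y_mod_Sig i m : (i <= n)%N -> Sig i (y i m - qint (n - i) q *: m).
Proof.
move=> hi; move: {2}(n - i)%N (erefl (n - i)%N) => d hd.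
elim: d i hi hd => [|d IH] i hi hd.
  have -> : i = n by lia.
  by rewrite y_act_n subnn /qint big_ord0 scale0r subr0; apply: subspace0 (Sig_subspace n).
have hin : (i < n)%N by lia.
set w := y i.+1 m; set c := qint (n - i.+1) q *: m.
have regroup : y i m - qint (n - i) q *: m = (w - c) - (T i.+1 w + w).
  rewrite (y_act_rec T q m hin) -[(n - i)%N](@subnSK i n) // qintSr scalerDl -/w -/c.
  set a := _ *: m; rewrite (addrC c) (addrC (T _ w)) !opprD !addrA.
  by rewrite (addrAC a) subrr add0r (addrAC w) subrr add0r addrC.
rewrite regroup; apply: (subspaceB (Sig_subspace i)).
  by apply: Sig_mono; apply: IH; lia.
case: (ltnP i.+1 n) => hi1.
  by apply: (@Sig_of_U _ i.+1); [lia | apply: (adm_image hU); lia].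
have -> : w = 0 by rewrite /w (_ : i.+1 = n) ?y_act_n //; lia.
by rewrite linear0 addr0; apply: subspace0 (Sig_subspace i).
Qed.

Definition homotopy i m := if (i < n)%N then x i (y i m) else 0.

Lemma homotopy_xy i m : (i <= n)%N -> homotopy i m = x i (y i m).
Proof.
rewrite /homotopy; case: ltnP => // hni hin.
by rewrite (_ : i = n) ?y_act_n ?linear0 //; lia.
Qed.

(* On Ups_i, s_i + s_(i-1) - [n]_q = y_i - [n-i]_q, using
   [n]_q = [n-i]_q + q^(n-i) [i]_q and the recursions for x and y. *)
Lemma homotopy_identity i m : (i <= n)%N -> Ups i m ->
  homotopy i m + (if (0 < i)%N then homotopy i.-1 m else 0) - qint n q *: m
    = y i m - qint (n - i) q *: m.
Proof.
case: i => [|i] hi hm; first by rewrite homotopy_xy // x_act0 addr0 subn0.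
rewrite /= !homotopy_xy; [| lia | lia].
rewrite x_actS (y_act_rec T q m hi) linearB linearZ /= (x_on_Ups hi hm).
have -> : qint n q = qint (n - i.+1) q + q ^+ (n - i.+1) * qint i.+1 q.
  by rewrite -qintD subnK.
rewrite scalerDl -scalerA; set a := x i _; set b := _ *: (_ *: m).
by rewrite opprD !addrA (addrAC (_ + a)) addrK (addrAC (y _ m)) addrK.
Qed.

Lemma homotopy_Ups i m : Ups i m -> Ups i.+1 (homotopy i m).
Proof.
rewrite /homotopy; case: ifP => hi hm; last exact: subspace0 (Ups_subspace _).
by apply: x_Ups => //; apply: y_Ups => //; exact: ltnW.
Qed.

Lemma homotopy_Sig i m : Sig i m -> Sig i.+1 (homotopy i m).
Proof.
rewrite /homotopy; case: ifP => _ hm; last exact: subspace0 (Sig_subspace _).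
by apply: x_Sig; apply: y_Sig.
Qed.

(* Part (iii): d s_i + s_(i-1) d = [n]_q on K_i. *)
Lemma homotopy_defect i m : (i <= n)%N -> Ups i m ->
  let d := homotopy i m + (if (0 < i)%N then homotopy i.-1 m else 0) - qint n q *: m in
  Ups i d /\ Sig i d.
Proof.
move=> hi hm d; rewrite /d homotopy_identity //; split; last exact: y_mod_Sig.
by apply: (subspaceB (Ups_subspace i)); [exact: y_Ups | exact: (subspaceZ (Ups_subspace i))].
Qed.

(* Exactness: a cycle m of K_i equals, modulo Ups_i \cap Sig_i, the boundary
   of [n]_q^-1 s_i m, because s_(i-1) m and the defect of (iii) vanish in K_i. *)
Lemma homotopy_exact i m : qint n q != 0 -> (i <= n)%N -> Ups i m ->
  ((0 < i)%N -> Sig i.-1 m) ->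
  exists m', ((i < n)%N \/ m' = 0) /\ Ups i.+1 m' /\ Ups i (m - m') /\ Sig i (m - m').
Proof.
move=> hqn hi hm hdm; set c := qint n q.
set t := if (0 < i)%N then homotopy i.-1 m else 0.
have [hUt hSt] : Ups i t /\ Sig i t.
  rewrite /t; case: i hi hm hdm {t} => [|i] hi hm hdm /=.
    by split; [exact: subspace0 (Ups_subspace _) | exact: subspace0 (Sig_subspace _)].
  by split; [apply: homotopy_Ups; exact: Ups_mono | apply: homotopy_Sig; exact: hdm].
have [hUd hSd] := homotopy_defect hi hm; rewrite -/c -/t in hUd hSd.
exists (c^-1 *: homotopy i m); split; [|split].
- case: (ltnP i n) => hin; [by left | right].
  by rewrite /homotopy ltnNge hin scaler0.
- by apply: subspaceZ (Ups_subspace _) _ _ (homotopy_Ups hm).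
have -> : m - c^-1 *: homotopy i m = c^-1 *: (t - (homotopy i m + t - c *: m)).
  rewrite opprB (addrC (homotopy i m)) opprD addrCA addNKr scalerBr scalerA mulVf //.
  by rewrite scale1r.
split; [apply: (subspaceZ (Ups_subspace i)) | apply: (subspaceZ (Sig_subspace i))].
  exact: (subspaceB (Ups_subspace i)).
exact: (subspaceB (Sig_subspace i)).
Qed.

End Complex.

Theorem lemma2p1 (k : fieldType) (M : lmodType k) (n : nat) (q : k)
    (T : nat -> {linear M -> M}) (U : nat -> M -> Prop) :
  (0 < n)%N ->
  is_Hecke_module n q T ->
  ((forall i m, U i m <-> T i m = q *: m) \/
   (forall i m, U i m <-> exists v, m = T i v + v)) ->
  let x := x_act T in
  let y := y_act n q T in
  let Ups := Upsilon U in
  let Sig := Sigma n U in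
  let s := fun (i : nat) (m : M) => if (i < n)%N then x i (y i m) else 0 in
  (forall i m, (i < n)%N ->
     (Ups i m -> Ups i.+1 (x i m)) /\ (Sig i m -> Sig i.+1 (y i m))) /\
  (forall i m, (i < n)%N ->
     (Ups i m -> Ups i.+1 (x i (y i m))) /\
     (Ups i m -> Sig i m -> Ups i.+1 (x i (y i m)) /\ Sig i.+1 (x i (y i m)))) /\
  (forall i m, (i <= n)%N -> Ups i m ->
     let d := s i m + (if (0 < i)%N then s i.-1 m else 0) - qint n q *: m in
     Ups i d /\ Sig i d) /\
  (qint n q != 0 ->
   forall i m, (i <= n)%N -> Ups i m -> ((0 < i)%N -> Sig i.-1 m) ->
     exists m', ((i < n)%N \/ m' = 0) /\ Ups i.+1 m' /\
                Ups i (m - m') /\ Sig i (m - m')).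
Proof.
move=> _ HT hUdef x y Ups Sig s.
have hU : admissible n q T U.
  by case: hUdef; [exact: kernel_admissible | exact: image_admissible].
have xy_Ups i m : (i < n)%N -> Ups i m -> Ups i.+1 (x i (y i m)).
  by move=> hi hm; apply: (x_Ups HT hU hi); apply: (y_Ups HT hU (ltnW hi)).
split; [|split; [|split]].
- by move=> i m hi; split; [exact: (x_Ups HT hU) | exact: (y_Sig HT hU)].
- move=> i m hi; split; first exact: xy_Ups.
  by move=> hm hsm; split; [exact: xy_Ups | apply: (x_Sig HT hU); apply: (y_Sig HT hU)].
- exact: (homotopy_defect HT hU).
- by move=> hqn i m; exact: (homotopy_exact HT hU hqn).
Qed.
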